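(* Let $(E,\mathcal{I}_1),\dots,(E,\mathcal{I}_k)$ be matroids on a common finite ground set $E$ with weight functions $w_i:E\to\mathbb{R}_+$, and let $\mathrm{Op}^{(1)},\mathrm{Op}^{(2)}\in\{\max,\min,\sum\}$. Let $r=\sum_{i\in[k]}\mathrm{rank}(\mathcal{I}_i)-|E|$, assumed nonnegative, and let $D=\{d_1,\dots,d_r\}$ be a set of $r$ new elements with $D\cap E=\emptyset$. For each $i\in[k]$ define $$\mathcal{I}_i'=\{D'\subseteq D\mid |D'|\le \mathrm{rank}(\mathcal{I}_i)-1\},\qquad \overline{\mathcal{I}}_i=\{I\cup D'\mid I\in\mathcal{I}_i,\ D'\in\mathcal{I}_i',\ |I\cup D'|\le \mathrm{rank}(\mathcal{I}_i)\}$$ (so $(E\cup D,\overline{\mathcal{I}}_i)$ is the $\mathrm{rank}(\mathcal{I}_i)$-truncation of the matroid union of $(E,\mathcal{I}_i)$ and the uniform matroid $(D,\mathcal{I}_i')$), and define $\overline{w}_i:E\cup D\to\mathbb{R}_+$ by $\overline{w}_i(e)=w_i(e)$ for $e\in E$, and for $e\in D$: $\overline{w}_i(e)=\min_{e'\in E}w_i(e')$ if $\mathrm{Op}^{(2)}=\max$, $\overline{w}_i(e)=\max_{e'\in E}w_i(e')$ if $\mathrm{Op}^{(2)}=\min$, and $\overline{w}_i(e)=0$ if $\mathrm{Op}^{(2)}=\sum$. Then the minimum $(\mathrm{Op}^{(1)},\mathrm{Op}^{(2)})$-value over feasible partitions of $E$ with respect to $(\mathcal{I}_i,w_i)_{i\in[k]}$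 equals the minimum $(\mathrm{Op}^{(1)},\mathrm{Op}^{(2)})$-value over feasible partitions of $E\cup D$ with respect to $(\overline{\mathcal{I}}_i,\overline{w}_i)_{i\in[k]}$.
   Context: For matroids $(E,\mathcal{I}_i)$, $i\in[k]=\{1,\dots,k\}$, a feasible partition of $E$ is a tuple $(I_1,\dots,I_k)$ of pairwise disjoint sets with $\bigcup_i I_i=E$, $I_i\neq\emptyset$ and $I_i\in\mathcal{I}_i$ for all $i$. For weights $w_i$, the $(\mathrm{Op}^{(1)},\mathrm{Op}^{(2)})$-value of a partition $(I_1,\dots,I_k)$ is $\mathrm{Op}^{(1)}_{i\in[k]}\mathrm{Op}^{(2)}_{e\in I_i}w_i(e)$ (e.g. the $(\sum,\max)$-value is $\sum_{i}\max_{e\in I_i}w_i(e)$). $\mathrm{rank}(\mathcal{I})$ denotes the common size of the bases of the matroid. Note $r\ge 0$ whenever $E$ has a feasible partition. *)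

From HB Require Import structures.
From mathcomp Require Import all_boot all_order all_algebra.
From mathcomp Require Import reals.
Set Implicit Arguments. Unset Strict Implicit. Unset Printing Implicit Defensive.
Import Order.TTheory GRing.Theory Num.Theory.
Local Open Scope ring_scope.

Section Matroids.
Variable T : finType.

Definition is_matroid (E : {set T}) (Ind : {set T} -> bool) : Prop :=
  [/\ forall S : {set T}, Ind S -> S \subset E,
      Ind set0,
      forall A B : {set T}, B \subset A -> Ind A -> Ind B
    & forall A B : {set T}, Ind A -> Ind B -> (#|A| < #|B|)%N ->
        exists2 x, x \in B :\: A & Ind (x |: A)].

Definition is_basis (Ind : {set T} -> bool) (B : {set T}) : Prop :=
  Ind B /\ forall S : {set T}, Ind S -> B \subset S -> S = B.

Definition mrank (Ind : {set T} -> bool) : nat :=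
  \max_(S : {set T} | Ind S) #|S|.
End Matroids.

Inductive Op := OMax | OMin | OSum.

Section Values.
Variable R : realType.

Definition opfun (o : Op) : R -> R -> R :=
  match o with OMax => Num.max | OMin => Num.min | OSum => +%R end.

(* Op applied to a finite (nonempty) list of reals; the empty list gets 0
   (only relevant in degenerate cases). *)
Definition opseq (o : Op) (s : seq R) : R :=
  match s with
  | [::] => 0
  | x :: s' => foldr (opfun o) x s'
  end.

Variable T : finType.
Variable k : nat.

Definition feasible_partition (X : {set T}) (Ind : 'I_k -> {set T} -> bool)
    (P : 'I_k -> {set T}) : Prop :=
  [/\ forall i j, i != j -> [disjoint P i & P j],
      \bigcup_(i < k) P i = X,
      forall i, P i != set0
    & forall i, Ind i (P i)].

Definition pvalue (o1 o2 : Op) (w : 'I_k -> T -> R) (P : 'I_k -> {set T}) : R :=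
  opseq o1 [seq opseq o2 [seq w i e | e <- enum (P i)] | i <- enum 'I_k].

Definition is_min_value (o1 o2 : Op) (X : {set T})
    (Ind : 'I_k -> {set T} -> bool) (w : 'I_k -> T -> R) (v : R) : Prop :=
  (exists2 P, feasible_partition X Ind P & pvalue o1 o2 w P = v) /\
  (forall P, feasible_partition X Ind P -> v <= pvalue o1 o2 w P).

(* The extended matroids  \bar I_i  on E \cup D :
   I'_i = {D' \subseteq D | |D'| <= rank(I_i) - 1}  (integer arithmetic, i.e.
   |D'| < rank(I_i)), and
   \bar I_i = {I \cup D' | I in I_i, D' in I'_i, |I \cup D'| <= rank(I_i)}. *)
Definition ext_ind (D : {set T}) (Ind : 'I_k -> {set T} -> bool)
    (i : 'I_k) (S : {set T}) : bool :=
  [exists I : {set T}, exists D' : {set T},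
    [&& Ind i I, D' \subset D, (#|D'| < mrank (Ind i))%N,
        S == I :|: D' & (#|I :|: D'| <= mrank (Ind i))%N]].

Definition dummy_weight (o2 : Op) (E : {set T}) (wi : T -> R) : R :=
  match o2 with
  | OMax => opseq OMin [seq wi e | e <- enum E]
  | OMin => opseq OMax [seq wi e | e <- enum E]
  | OSum => 0
  end.

Definition ext_weight (o2 : Op) (E D : {set T}) (w : 'I_k -> T -> R)
    (i : 'I_k) (e : T) : R :=
  if e \in D then dummy_weight o2 E (w i) else w i e.
End Values.

(* Pad a feasible partition (I_1, ..., I_k) of E with the r dummies so that
   block i receives rank(I_i) - |I_i| of them; this is possible because these
   numbers sum to r.  Conversely, every block of a feasible partition of E ∪ D
   has at most rank(I_i) elements, and the blocks together have
   sum_i rank(I_i) = |E ∪ D| elements, so every block is full: it then contains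
   fewer dummies than elements, hence its trace on E is a nonempty independent
   set.  The dummy weights never change the Op2-value of a block that contains
   an element of E: they are dominated by (max), dominate (min) or are neutral
   for (sum) the weights on E. *)

From mathcomp Require Import all_boot all_order all_algebra.
From mathcomp Require Import reals.
Set Implicit Arguments.
Unset Strict Implicit.
Unset Printing Implicit Defensive.
Import Order.TTheory GRing.Theory Num.Theory.
Local Open Scope ring_scope.

Section OpSeq.
Variable R : realType.
Implicit Types (s : seq R) (x y m : R).

Lemma opseq_max_ub s : {in s, forall y, y <= opseq OMax s}.
Proof.
case: s => // x s y; rewrite [opseq _ _]/= foldrE inE => /predU1P[->|ys].
  exact: bigmax_ge_id.
exact: le_bigmax_seq x y xpredT id ys isT.
Qed.

Lemma opseq_max_le s x m : x \in s -> {in s, forall y, y <= m} ->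
  opseq OMax s <= m.
Proof.
case: s => // x0 s _ ub; rewrite [opseq _ _]/= foldrE big_seq.
by apply: bigmax_le => [|y ys]; apply: ub; rewrite inE ?eqxx ?ys ?orbT.
Qed.

Lemma opseq_min_lb s : {in s, forall y, opseq OMin s <= y}.
Proof.
case: s => // x s y; rewrite [opseq _ _]/= foldrE inE => /predU1P[->|ys].
  exact: bigmin_le_id.
exact: ge_bigmin_seq x y xpredT id ys isT.
Qed.

Lemma opseq_min_ge s x m : x \in s -> {in s, forall y, m <= y} ->
  m <= opseq OMin s.
Proof.
case: s => // x0 s _ lb; rewrite [opseq _ _]/= foldrE big_seq.
by apply: le_bigmin => [|y ys]; apply: lb; rewrite inE ?eqxx ?ys ?orbT.
Qed.

Lemma opseq_sum s : opseq OSum s = \sum_(x <- s) x.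
Proof.
case: s => [|x s]; first by rewrite big_nil.
by rewrite /= foldrE big_change_idx big_cons [RHS]addrC.
Qed.

Variable T : finType.
Implicit Types (f : T -> R) (A B : {set T}).

Lemma map_enum_f f A e : e \in A -> f e \in [seq f e | e <- enum A].
Proof. by move=> Ae; rewrite map_f ?mem_enum. Qed.

Lemma opseq_max_setU f A B a : a \in A -> {in B, forall b, f b <= f a} ->
  opseq OMax [seq f e | e <- enum (A :|: B)] =
  opseq OMax [seq f e | e <- enum A].
Proof.
move=> Aa leB; have mem_f := map_enum_f f.
have ABa : a \in A :|: B by rewrite inE Aa.
apply/le_anti/andP; split.
  apply: (opseq_max_le (mem_f _ _ ABa)) => y /mapP[e]; rewrite mem_enum inE.
  case/orP => [Ae|Be] ->; first exact/opseq_max_ub/mem_f.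
  exact/(le_trans (leB _ Be))/opseq_max_ub/mem_f.
apply: (opseq_max_le (mem_f _ _ Aa)) => y /mapP[e]; rewrite mem_enum => Ae ->.
by apply/opseq_max_ub/mem_f; rewrite inE Ae.
Qed.

Lemma opseq_min_setU f A B a : a \in A -> {in B, forall b, f a <= f b} ->
  opseq OMin [seq f e | e <- enum (A :|: B)] =
  opseq OMin [seq f e | e <- enum A].
Proof.
move=> Aa geB; have mem_f := map_enum_f f.
have ABa : a \in A :|: B by rewrite inE Aa.
apply/le_anti/andP; split; last first.
  apply: (opseq_min_ge (mem_f _ _ ABa)) => y /mapP[e]; rewrite mem_enum inE.
  case/orP => [Ae|Be] ->; first exact/opseq_min_lb/mem_f.
  exact/(le_trans _ (geB _ Be))/opseq_min_lb/mem_f.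
apply: (opseq_min_ge (mem_f _ _ Aa)) => y /mapP[e]; rewrite mem_enum => Ae ->.
by apply/opseq_min_lb/mem_f; rewrite inE Ae.
Qed.

Lemma opseq_sum_setU f A B : {in B, forall b, f b = 0} ->
  opseq OSum [seq f e | e <- enum (A :|: B)] =
  opseq OSum [seq f e | e <- enum A].
Proof.
move=> f0; rewrite !opseq_sum !big_map !big_enum /= (big_setID A) /= setUK.
rewrite setDUl setDv set0U [X in _ + X]big1 ?addr0 // => e.
by rewrite inE => /andP[_ /f0].
Qed.
End OpSeq.

Section Partitions.
Variable T : finType.
Implicit Types (A D : {set T}).

Lemma card_bigcup_disjoint (I : finType) (F : I -> {set T}) :
  (forall i j, i != j -> [disjoint F i & F j]) ->
  #|\bigcup_i F i| = (\sum_i #|F i|)%N.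
Proof.
move=> disjF; rewrite -sum1_card partition_disjoint_bigcup //.
by apply: eq_bigr => i _; rewrite sum1_card.
Qed.

Lemma exists_subset_card D n : (n <= #|D|)%N ->
  exists2 A : {set T}, A \subset D & #|A| = n.
Proof.
move=> le_nD; exists [set x | x \in take n (enum D)].
  by apply/subsetP => x; rewrite inE => /mem_take; rewrite mem_enum.
rewrite cardsE (card_uniqP (take_uniq _ (enum_uniq _))) size_take -cardE.
by case: ltngtP le_nD => // /ltnW; rewrite leqNgt => /negbTE ->.
Qed.

Lemma partition_by_sizes_seq (I : eqType) (s : seq I) (c : I -> nat) D :
  uniq s -> #|D| = (\sum_(i <- s) c i)%N ->
  exists F : I -> {set T},
    [/\ \bigcup_(i <- s) F i = D, {in s, forall i, #|F i| = c i}
      & {in s &, forall i j, i != j -> [disjoint F i & F j]}].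
Proof.
elim: s D => [|a s IH] D.
  move=> _; rewrite big_nil => /eqP; rewrite cards_eq0 => /eqP ->.
  by exists (fun=> set0); split; rewrite ?big_nil.
move=> /= /andP[a_notin_s uniq_s]; rewrite big_cons => cardD.
have [|A sAD cardA] := @exists_subset_card D (c a).
  by rewrite cardD leq_addr.
have [|F [cupF cardF disjF]] := IH (D :\: A) uniq_s.
  by rewrite cardsD (setIidPr sAD) cardA cardD addKn.
have neq_a i : i \in s -> (i == a) = false.
  by move=> i_s; apply: contraNF a_notin_s => /eqP <-.
have disjAF i : i \in s -> [disjoint A & F i].
  move=> i_s; apply: disjointWr (_ : F i \subset D :\: A) _.
    by rewrite -cupF (big_rem i) //= subsetUl.
  by rewrite disjoint_sym disjoints_subset setDE subsetIr.
exists (fun i => if i == a then A else F i); split.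
- rewrite big_cons eqxx (eq_big_seq F) => [|i /neq_a -> //].
  by rewrite cupF -{1}(setIidPr sAD) setID.
- move=> i; rewrite inE => /predU1P[->|/[dup] i_s /neq_a ->];
    by rewrite ?eqxx ?cardF.
- move=> i j; rewrite !inE => /predU1P[->|i_s] /predU1P[->|j_s];
    rewrite ?eqxx ?neq_a //= => ij.
  + exact: disjAF.
  + by rewrite disjoint_sym disjAF.
  + exact: disjF.
Qed.

Lemma partition_by_sizes (I : finType) (c : I -> nat) D :
  #|D| = (\sum_i c i)%N ->
  exists F : I -> {set T},
    [/\ \bigcup_i F i = D, forall i, #|F i| = c i
      & forall i j, i != j -> [disjoint F i & F j]].
Proof.
rewrite -big_enum => /(partition_by_sizes_seq (enum_uniq I)).
case=> F [cupF cardF disjF].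
exists F; split => [|i|i j]; rewrite -?cupF ?big_enum //.
- by rewrite cardF ?mem_enum.
- by apply: disjF; rewrite mem_enum.
Qed.

Lemma disjoint_setU2 (A B C D : {set T}) :
  [disjoint A & C] -> [disjoint A & D] ->
  [disjoint B & C] -> [disjoint B & D] -> [disjoint A :|: B & C :|: D].
Proof.
rewrite -!setI_eq0 setIUl !setIUr.
by move=> /eqP-> /eqP-> /eqP-> /eqP->; rewrite !setU0.
Qed.
End Partitions.

Section Matroids.
Variable T : finType.

Lemma matroid_indep_sub (E S : {set T}) (Ind : {set T} -> bool) :
  is_matroid E Ind -> Ind S -> S \subset E.
Proof. by case=> sub _ _ _; apply: sub. Qed.

Lemma card_indep_le_mrank (Ind : {set T} -> bool) (S : {set T}) :
  Ind S -> (#|S| <= mrank Ind)%N.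
Proof. exact: (@leq_bigmax_cond _ Ind (fun S => #|S|)). Qed.
End Matroids.

Section Extension.
Variables (R : realType) (T : finType) (k : nat).
Variables (E D : {set T}) (Ind : 'I_k -> {set T} -> bool) (w : 'I_k -> T -> R).
Variable o2 : Op.
Hypothesis matroid_Ind : forall i, is_matroid E (Ind i).
Hypothesis disjoint_DE : [disjoint D & E].
Implicit Types (i : 'I_k) (S I : {set T}).

Lemma ext_ind_card_le i S : ext_ind D Ind i S -> (#|S| <= mrank (Ind i))%N.
Proof. by case/existsP=> I /existsP[D' /and5P[_ _ _ /eqP->]]. Qed.

Lemma ext_ind_setU i I (D' : {set T}) : Ind i I -> I != set0 -> D' \subset D ->
  (#|I| + #|D'| = mrank (Ind i))%N -> ext_ind D Ind i (I :|: D').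
Proof.
move=> indI nzI sD' cardID; apply/existsP; exists I; apply/existsP; exists D'.
rewrite indI sD' eqxx -cardID (leq_card_setU I D').1 /=.
by rewrite -[X in (X < _)%N]add0n ltn_add2r card_gt0 nzI.
Qed.

Lemma ext_ind_setIE i S : ext_ind D Ind i S -> #|S| = mrank (Ind i) ->
  Ind i (S :&: E) /\ S :&: E != set0.
Proof.
case/existsP=> I /existsP[D' /and5P[indI sD' ltD' /eqP-> _]] cardS.
have sIE := matroid_indep_sub (matroid_Ind i) indI.
have D'E0 : D' :&: E = set0 by apply/eqP; rewrite setI_eq0 (disjointWl sD').
rewrite setIUl (setIidPl sIE) D'E0 setU0; split=> //.
rewrite -card_gt0 lt0n; apply: contraTneq ltD' => cardI0.
by rewrite -leqNgt -cardS (leq_trans (leq_card_setU I D').1) ?cardI0.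
Qed.

Lemma ext_weight_ground i e : e \in E -> ext_weight o2 E D w i e = w i e.
Proof. by move=> Ee; rewrite /ext_weight (disjointFl disjoint_DE Ee). Qed.

Lemma ext_weight_block i I (D' : {set T}) :
  I \subset E -> D' \subset D -> I != set0 ->
  opseq o2 [seq ext_weight o2 E D w i e | e <- enum (I :|: D')] =
  opseq o2 [seq w i e | e <- enum I].
Proof.
move=> sIE sD'D /set0Pn[a Ia]; have Ea := subsetP sIE _ Ia.
have <- : [seq ext_weight o2 E D w i e | e <- enum I] =
          [seq w i e | e <- enum I].
  apply/eq_in_map => e; rewrite mem_enum => /(subsetP sIE).
  exact: ext_weight_ground.
have dummy e : e \in D' -> ext_weight o2 E D w i e = dummy_weight o2 E (w i).
  by rewrite /ext_weight => /(subsetP sD'D) ->.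
have mem_wE := map_enum_f (w i) Ea.
have ext_a : ext_weight o2 E D w i a = w i a by apply: ext_weight_ground.
case: o2 dummy ext_a => dummy ext_a.
- by apply: (opseq_max_setU Ia) => e /dummy ->; rewrite ext_a opseq_min_lb.
- by apply: (opseq_min_setU Ia) => e /dummy ->; rewrite ext_a opseq_max_ub.
- by apply: opseq_sum_setU => e /dummy.
Qed.

Lemma eq_pvalue o1 (w1 w2 : 'I_k -> T -> R) (P1 P2 : 'I_k -> {set T}) :
  (forall i, opseq o2 [seq w1 i e | e <- enum (P1 i)] =
             opseq o2 [seq w2 i e | e <- enum (P2 i)]) ->
  pvalue o1 o2 w1 P1 = pvalue o1 o2 w2 P2.
Proof. by move=> eq_block; rewrite /pvalue; congr opseq; apply/eq_map. Qed.

Hypothesis card_D : #|D| = (\sum_(i < k) mrank (Ind i) - #|E|)%N.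

Lemma extend_feasible_partition o1 P : feasible_partition E Ind P ->
  exists2 Q, feasible_partition (E :|: D) (ext_ind D Ind) Q &
    pvalue o1 o2 (ext_weight o2 E D w) Q = pvalue o1 o2 w P.
Proof.
case=> disjP cupP nzP indP.
have sPE i : P i \subset E := matroid_indep_sub (matroid_Ind i) (indP i).
have lePr i := card_indep_le_mrank (indP i).
have [|F [cupF cardF disjF]] :=
  @partition_by_sizes _ _ (fun i => mrank (Ind i) - #|P i|)%N D.
  by rewrite card_D sumnB // -card_bigcup_disjoint // cupP.
have sFD i : F i \subset D by rewrite -cupF (bigcup_sup i).
have disjPF i j : [disjoint P i & F j].
  by rewrite disjoint_sym (disjointW (sFD j) (sPE i)).
exists (fun i => P i :|: F i).
  split=> [i j ij||i|i].
  - by apply: disjoint_setU2; rewrite ?disjP ?disjF ?disjPF // disjoint_sym.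
  - by rewrite big_split /= cupP cupF.
  - by rewrite setU_eq0 negb_and nzP.
  - by apply: ext_ind_setU; rewrite ?cardF ?subnKC.
by apply: eq_pvalue => i; apply: ext_weight_block.
Qed.

Hypothesis card_E : (#|E| <= \sum_(i < k) mrank (Ind i))%N.

Lemma restrict_feasible_partition o1 Q :
  feasible_partition (E :|: D) (ext_ind D Ind) Q ->
  exists2 P, feasible_partition E Ind P &
    pvalue o1 o2 w P = pvalue o1 o2 (ext_weight o2 E D w) Q.
Proof.
case=> disjQ cupQ nzQ indQ.
have sQED i : Q i \subset E :|: D by rewrite -cupQ (bigcup_sup i).
have cardQ i : #|Q i| = mrank (Ind i).
  have leQr j : (#|Q j| <= mrank (Ind j))%N := ext_ind_card_le (indQ j).
  have cardED : #|E :|: D| = (#|E| + #|D|)%N.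
    by apply/eqP; rewrite (leq_card_setU E D).2 disjoint_sym.
  have sumQ : (\sum_i #|Q i| = \sum_i mrank (Ind i))%N.
    by rewrite -card_bigcup_disjoint // cupQ cardED card_D subnKC.
  have := (leqif_sum (C := fun j => #|Q j| == mrank (Ind j))
             (fun j (_ : true) => leqif_eq (leQr j))).2.
  by rewrite sumQ eqxx => /esym/forallP/(_ i)/eqP.
have indQE i := (ext_ind_setIE (indQ i) (cardQ i)).1.
have nzQE i := (ext_ind_setIE (indQ i) (cardQ i)).2.
exists (fun i => Q i :&: E).
  split=> // [i j /disjQ|].
  - by apply: disjointW; apply: subsetIl.
  - by rewrite -big_distrl /= cupQ setUK.
apply: eq_pvalue => i.
by rewrite -{2}(setIidPl (sQED i)) setIUr ext_weight_block ?subsetIr.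
Qed.
End Extension.

Lemma is_min_value_transfer (R : realType) (T : finType) (k : nat) (o1 o2 : Op)
    (X1 X2 : {set T}) (Ind1 Ind2 : 'I_k -> {set T} -> bool)
    (w1 w2 : 'I_k -> T -> R) (v : R) :
  (forall P1, feasible_partition X1 Ind1 P1 ->
     exists2 P2, feasible_partition X2 Ind2 P2 &
       pvalue o1 o2 w2 P2 = pvalue o1 o2 w1 P1) ->
  (forall P2, feasible_partition X2 Ind2 P2 ->
     exists2 P1, feasible_partition X1 Ind1 P1 &
       pvalue o1 o2 w1 P1 = pvalue o1 o2 w2 P2) ->
  is_min_value o1 o2 X1 Ind1 w1 v -> is_min_value o1 o2 X2 Ind2 w2 v.
Proof.
move=> to2 to1 [[P1 feasP1 <-] minP1]; split=> [|P2 /to1[Q1 feasQ1 <-]].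
  by have [P2 feasP2 eqv] := to2 _ feasP1; exists P2.
exact: minP1.
Qed.

Theorem mainTheorem1 (R : realType) (T : finType) (k : nat)
    (E D : {set T}) (Ind : 'I_k -> {set T} -> bool) (w : 'I_k -> T -> R)
    (o1 o2 : Op) :
  (forall i, is_matroid E (Ind i)) ->
  (forall i e, e \in E -> 0 <= w i e) ->
  (#|E| <= \sum_(i < k) mrank (Ind i))%N ->
  [disjoint D & E] ->
  #|D| = (\sum_(i < k) mrank (Ind i) - #|E|)%N ->
  forall v : R,
    is_min_value o1 o2 E Ind w v <->
    is_min_value o1 o2 (E :|: D) (ext_ind D Ind) (ext_weight o2 E D w) v.
Proof.
move=> matroid_Ind _ card_E disjoint_DE card_D v.
have extend := extend_feasible_partition w o2 matroid_Ind disjoint_DE card_D o1.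
have restrict :=
  restrict_feasible_partition w o2 matroid_Ind disjoint_DE card_D card_E o1.
by split; apply: is_min_value_transfer.
Qed.
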